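(* Let $p$ be an odd prime and let $X$ be a finite family of $4p-3$ lattice points in $\mathbb{Z}^2$ (repetitions allowed). Then \[ 3-2(p-1,X)-2(p,X)+(2p-1,X)+(2p,X)\equiv 0 \pmod p. \]
   Context: For a finite family $X$ of lattice points in $\mathbb{Z}^2$ (points may repeat; subsets are subfamilies, i.e. subsets of the index set) and an integer $n\ge 0$, $(n,X)$ denotes the number of $n$-element subfamilies of $X$ whose coordinatewise sum is congruent to $(0,0)$ modulo $p$. *)

From mathcomp Require Import all_boot all_order all_algebra.
Set Implicit Arguments. Unset Strict Implicit. Unset Printing Implicit Defensive.
Import GRing.Theory Num.Theory.
Local Open Scope ring_scope.

(* A finite family of lattice points in Z^2 with N members is a map from the
   index set 'I_N to int * int (repetitions allowed).  Subfamilies are subsets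
   of the index set. *)

Definition zero_sum_mod (p : nat) (N : nat) (X : 'I_N -> int * int)
  (S : {set 'I_N}) : bool :=
  (((\sum_(i in S) (X i).1) %% p%:Z)%Z == 0) &&
  (((\sum_(i in S) (X i).2) %% p%:Z)%Z == 0).

Definition nzs (p : nat) (n : nat) (N : nat) (X : 'I_N -> int * int) : nat :=
  #|[set S : {set 'I_N} | (#|S| == n) && zero_sum_mod p X S]|.

From mathcomp Require Import all_boot all_order all_algebra zify finfield ring.
Set Implicit Arguments. Unset Strict Implicit. Unset Printing Implicit Defensive.
Import GRing.Theory Num.Theory.
Local Open Scope ring_scope.

(* Chevalley-Warning by finite differences.  Regard a function of a
   subfamily S of the index set I as a polynomial in the indicator variables
   of the points of S.  If its degree is below |I|, its alternating sum
   sum_S (-1)^|S| h(S) vanishes: each Mobius coefficient of h is multiplied by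
   a complete alternating sum over the supersets of a proper subset of I.
   Over F_p, Fermat makes (1 - L1(S)^(p-1)) (1 - L2(S)^(p-1)), with L1, L2 the
   coordinate sums of S, the indicator of "S has zero sum"; it has degree
   2p - 2.  Multiply it by a function w(|S|) of degree 2p - 2 such that, for
   k <= 4p - 3, (-1)^k w(k) is 3, -2, -2, 1, 1 at k = 0, p - 1, p, 2p - 1, 2p
   and 0 elsewhere.  The product has degree 4p - 4 < 4p - 3, and its
   alternating sum is the left-hand side of the congruence. *)

Section LowDegreeSetFunctions.
Variables (R : pzRingType) (I : finType).
Implicit Types (h : {set I} -> R) (S T : {set I}).

(* [h] has degree at most [k] as a polynomial in the indicator variables of
   the elements of [I]: its Mobius transform [c] vanishes on sets of size > k. *)
Definition setfun_deg_le k h :=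
  exists c : {set I} -> R, (forall T, (k < #|T|)%N -> c T = 0) /\
    forall S, h S = \sum_(T : {set I} | T \subset S) c T.

Lemma setfun_deg_leW k k' h :
  (k <= k')%N -> setfun_deg_le k h -> setfun_deg_le k' h.
Proof.
move=> le_kk' [c [c0 hc]]; exists c; split=> // T lt_k'T.
exact/c0/(leq_ltn_trans le_kk').
Qed.

Lemma eq_setfun_deg_le k h h' :
  h =1 h' -> setfun_deg_le k h -> setfun_deg_le k h'.
Proof. by move=> eq_h [c [c0 hc]]; exists c; split=> // S; rewrite -eq_h. Qed.

Lemma setfun_deg_le_cst a : setfun_deg_le 0 (fun=> a).
Proof.
exists (fun T => if T == set0 then a else 0); split.
  by move=> T; rewrite card_gt0 => /negbTE ->.
move=> S; rewrite (bigD1 set0) ?sub0set //= eqxx big1 ?addr0 //.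
by move=> T /andP[_ /negbTE ->].
Qed.

Lemma setfun_deg_le_sum_in (a : I -> R) :
  setfun_deg_le 1 (fun S => \sum_(i in S) a i).
Proof.
exists (fun T => \sum_i (if T == [set i] then a i else 0)); split.
  move=> T T_gt1; apply: big1 => i _.
  by case: eqP => // defT; rewrite defT cards1 in T_gt1.
move=> S; rewrite exchange_big big_mkcond; apply: eq_bigr => i _ /=.
have [iS | niS] := boolP (i \in S).
  rewrite (bigD1 [set i]) ?sub1set //= eqxx big1 ?addr0 //.
  by move=> T /andP[_ /negbTE ->].
rewrite big1 // => T sTS; case: eqP => // defT.
by move: sTS; rewrite defT sub1set (negbTE niS).
Qed.

Lemma setfun_deg_leD k h1 h2 : setfun_deg_le k h1 -> setfun_deg_le k h2 ->
  setfun_deg_le k (fun S => h1 S + h2 S).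
Proof.
move=> [c1 [c10 h1c]] [c2 [c20 h2c]]; exists (fun T => c1 T + c2 T); split.
  by move=> T lt_kT; rewrite c10 ?c20 ?addr0.
by move=> S; rewrite big_split h1c h2c.
Qed.

Lemma setfun_deg_leN k h : setfun_deg_le k h -> setfun_deg_le k (fun S => - h S).
Proof.
move=> [c [c0 hc]]; exists (fun T => - c T); split.
  by move=> T lt_kT; rewrite c0 ?oppr0.
by move=> S; rewrite sumrN hc.
Qed.

Lemma setfun_deg_leB k h1 h2 : setfun_deg_le k h1 -> setfun_deg_le k h2 ->
  setfun_deg_le k (fun S => h1 S - h2 S).
Proof. by move=> d1 /setfun_deg_leN; apply: setfun_deg_leD. Qed.

Lemma setfun_deg_leMn k h n :
  setfun_deg_le k h -> setfun_deg_le k (fun S => h S *+ n).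
Proof.
move=> [c [c0 hc]]; exists (fun T => c T *+ n); split.
  by move=> T lt_kT; rewrite c0 ?mul0rn.
by move=> S; rewrite hc sumrMnl.
Qed.

(* The Mobius transform of a product is the union-convolution of the transforms. *)
Lemma setfun_deg_leM k1 k2 h1 h2 : setfun_deg_le k1 h1 -> setfun_deg_le k2 h2 ->
  setfun_deg_le (k1 + k2) (fun S => h1 S * h2 S).
Proof.
move=> [c1 [c10 h1c]] [c2 [c20 h2c]].
exists (fun U => \sum_(T1 : {set I}) \sum_(T2 : {set I})
  (if U == T1 :|: T2 then c1 T1 * c2 T2 else 0)).
split=> [U lt_kU | S].
  apply: big1 => T1 _; apply: big1 => T2 _; case: eqP => // defU.
  have : (k1 + k2 < #|T1| + #|T2|)%N.
    by apply: (leq_trans lt_kU); rewrite defU cardsU leq_subr.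
  have [/c10 -> | le_T1k1 lt_k] := ltnP k1 #|T1|; first by rewrite mul0r.
  by rewrite c20 ?mulr0 //; lia.
rewrite h1c h2c big_distrlr /=; symmetry; rewrite exchange_big /=.
under eq_bigr => T1 _ do rewrite exchange_big /=.
rewrite [RHS]big_mkcond; apply: eq_bigr => T1 _ /=.
have [sT1S | nsT1S] := boolP (T1 \subset S); last first.
  rewrite big1 // => T2 _; rewrite big1 // => U sUS; case: eqP => // defU.
  by move: sUS nsT1S; rewrite defU subUset => /andP[->].
rewrite [RHS]big_mkcond; apply: eq_bigr => T2 _ /=.
have [sT2S | nsT2S] := boolP (T2 \subset S).
  rewrite (bigD1 (T1 :|: T2)) /= ?eqxx ?subUset ?sT1S ?sT2S // big1 ?addr0 //.
  by move=> U /andP[_ /negbTE ->].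
rewrite big1 // => U sUS; case: eqP => // defU.
by move: sUS nsT2S; rewrite defU subUset => /andP[_ ->].
Qed.

Lemma setfun_deg_leX k h n :
  setfun_deg_le k h -> setfun_deg_le (k * n) (fun S => h S ^+ n).
Proof.
move=> dh; elim: n => [|n IHn]; first by rewrite muln0; apply: setfun_deg_le_cst.
rewrite mulnS; apply: (@eq_setfun_deg_le _ (fun S => h S * h S ^+ n)).
  by move=> S; rewrite exprS.
exact: setfun_deg_leM.
Qed.

Lemma setfun_deg_le_sum (J : finType) (P : pred J) k (h : J -> {set I} -> R) :
  (forall j, P j -> setfun_deg_le k (h j)) ->
  setfun_deg_le k (fun S => \sum_(j | P j) h j S).
Proof.
move=> dh; have d0 : setfun_deg_le k (fun=> 0).
  by apply: setfun_deg_leW (setfun_deg_le_cst 0).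
elim: (index_enum J) => [|j r IHr].
  by apply: eq_setfun_deg_le d0 => S; rewrite big_nil.
apply: (@eq_setfun_deg_le _ (fun S => (if P j then h j S else 0) +
    \sum_(j <- r | P j) h j S)).
  by move=> S; rewrite big_cons; case: (P j); rewrite ?add0r.
by apply: setfun_deg_leD IHr; case: (boolP (P j)) => [/dh | _].
Qed.

Lemma setfun_deg_le_bin j : setfun_deg_le j (fun S => 'C(#|S|, j)%:R).
Proof.
exists (fun T => (#|T| == j)%:R); split=> [T lt_jT | S].
  by rewrite gtn_eqF.
rewrite -cards_draws -sumr_const big_mkcond [RHS]big_mkcond /=.
by apply: eq_bigr => T _; rewrite inE; case: (T \subset S); case: (#|T| == j).
Qed.

Lemma setfun_deg_le_card : setfun_deg_le 1 (fun S => #|S|%:R).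
Proof. by apply: eq_setfun_deg_le (setfun_deg_le_bin 1) => S; rewrite bin1. Qed.

Lemma setfun_deg_le_powD1 g n : setfun_deg_le 1 g ->
  setfun_deg_le n.-1 (fun S => (g S + 1) ^+ n - g S ^+ n).
Proof.
move=> dg; case: n => [|n] /=.
  by apply: eq_setfun_deg_le (setfun_deg_le_cst 0) => S; rewrite !expr0 subrr.
apply: (@eq_setfun_deg_le _
  (fun S => \sum_(i < n.+1) g S ^+ (n - i) *+ 'C(n.+1, i.+1))).
  move=> S; rewrite exprDn_comm; last exact: commr1.
  rewrite [in RHS]big_ord_recl subn0 bin0 expr0 mulr1 mulr1n addrC addKr.
  by apply: eq_bigr => i _; rewrite expr1n mulr1 subSS.
apply: setfun_deg_le_sum => i _; apply/setfun_deg_leMn.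
by apply: setfun_deg_leW (setfun_deg_leX _ dg); rewrite mul1n leq_subr.
Qed.

(* Toggling a point outside [T] is a sign-reversing involution on supersets of [T]. *)
Lemma sum_sign_supset_eq0 T :
  T != setT -> \sum_(S : {set I} | T \subset S) (-1) ^+ #|S| = 0 :> R.
Proof.
rewrite eqEsubset subsetT /= => /subsetPn[i _ niT].
pose tog S := if i \in S then S :\ i else i |: S.
have tog_in S : (i \in tog S) = (i \notin S).
  by rewrite /tog; case: ifP => iS; rewrite ?setD11 ?setU11.
have togK : involutive tog.
  move=> S; rewrite /tog; have [iS | niS] := boolP (i \in S).
    by rewrite setD11 setD1K.
  by rewrite setU11 setU1K.
have tog_sub S : (T \subset tog S) = (T \subset S).
  rewrite /tog; case: ifP => _; first by rewrite subsetD1 niT andbT.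
  by rewrite -subDset (setDidPl _) // disjoint_sym disjoints1.
have tog_sign S : (-1) ^+ #|tog S| = - (-1) ^+ #|S| :> R.
  rewrite /tog; case: ifP => iS; last by rewrite cardsU1 iS add1n exprS mulN1r.
  by rewrite [in RHS](cardsD1 i S) iS add1n exprS mulN1r opprK.
rewrite (bigID (fun S : {set I} => i \in S)) /= (reindex_inj (inv_inj togK)) /=.
under eq_bigl => S do rewrite tog_sub tog_in.
under eq_bigr => S _ do rewrite tog_sign.
by rewrite sumrN addNr.
Qed.

Lemma alternating_sum_eq0 k h : setfun_deg_le k h -> (k < #|I|)%N ->
  \sum_(S : {set I}) (-1) ^+ #|S| * h S = 0.
Proof.
move=> [c [c0 hc]] lt_kI.
under eq_bigr => S _ do rewrite hc mulr_sumr.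
rewrite (exchange_big_dep predT) //=; apply: big1 => T _.
rewrite -mulr_suml; have [-> | nTT] := eqVneq T setT.
  by rewrite c0 ?cardsT ?mulr0.
by rewrite sum_sign_supset_eq0 ?mul0r.
Qed.

End LowDegreeSetFunctions.

Section FiniteFieldIndicator.
Variable F : finFieldType.

Lemma expf_card_pred (x : F) : x != 0 -> x ^+ #|F|.-1 = 1.
Proof.
move=> nz_x; apply: (mulfI nz_x); rewrite mulr1 -exprS.
by rewrite prednK ?expf_card // (ltn_trans _ (finNzRing_gt1 F)).
Qed.

Lemma subr1_expf_card_pred (x : F) : 1 - x ^+ #|F|.-1 = (x == 0)%:R.
Proof.
have [-> | nz_x] := eqVneq x 0; last by rewrite expf_card_pred ?subrr.
by rewrite expr0n -subn1 subn_eq0 leqNgt finNzRing_gt1 subr0.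
Qed.

End FiniteFieldIndicator.

Section PrimeField.
Variable p : nat.
Hypothesis p_pr : prime p.
Local Notation F := 'F_p.

Lemma Fp_int_mod_eq0 (z : int) : ((z %% p%:Z)%Z == 0) = (z%:~R == 0 :> F).
Proof. by rewrite -(dvdz_pcharf (pchar_Fp p_pr)); apply/eqP/dvdz_mod0P. Qed.

Lemma Fp_indicator (x : F) : 1 - x ^+ p.-1 = (x == 0)%:R.
Proof. by rewrite -[in p.-1](card_Fp p_pr) subr1_expf_card_pred. Qed.

Lemma Fp_nat_indicator n : 1 - (n%:R : F) ^+ p.-1 = (p %| n)%:R.
Proof. by rewrite Fp_indicator -(dvdn_pcharf (pchar_Fp p_pr)). Qed.

(* Vandermonde: the inner terms [C(k, j) C(p, p - j)], [0 < j < p], vanish mod p. *)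
Lemma Fp_bin_addp k : 'C(k + p, p)%:R = 'C(k, p)%:R + 1 :> F.
Proof.
rewrite -binomial.Vandermonde natr_sum (bigD1 ord0) //= (bigD1 ord_max) //=.
rewrite big1 ?addr0 => [|j /andP[j_neq0 j_neqp]].
  by rewrite subn0 bin0 binn subnn bin0 !muln1 addrC.
apply/eqP; rewrite natrM mulf_eq0 -!(dvdn_pcharf (pchar_Fp p_pr)).
apply/orP; right; apply: prime_dvd_bin => //.
by move: j_neq0 j_neqp (ltn_ord j); rewrite -!val_eqE /=; lia.
by rewrite -val_eqE /= -lt0n prime_gt0.
Qed.

Lemma Fp_bin_p q r : (r < p)%N -> 'C(q * p + r, p)%:R = q%:R :> F.
Proof.
move=> lt_rp; elim: q => [|q IHq]; first by rewrite bin_small.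
by rewrite mulSnr -addnA [(p + r)%N]addnC addnA Fp_bin_addp IHq -natr1.
Qed.

End PrimeField.

Section Weight.
Variable p : nat.
Hypothesis p_pr : prime p.
Local Notation F := 'F_p.

(* By Fermat [1 - k^(p-1)] is the indicator of [p %| k] and by [Fp_bin_p]
   [C(k, p)] is [k %/ p] mod p, so [weight k] is
   [(3 - k %/ p) [p %| k] - (2 - k %/ p) [p %| k.+1]] (see [weightE]).  In the
   last factor the leading terms of the two indicators cancel, which keeps the
   degree in [k] at [2p - 2]. *)
Definition weight (k : nat) : F :=
  3 * (1 - (k%:R : F) ^+ p.-1) - 2 * (1 - (k.+1%:R : F) ^+ p.-1)
  - 'C(k, p)%:R * ((1 - (k%:R : F) ^+ p.-1) - (1 - (k.+1%:R : F) ^+ p.-1)).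

Lemma weightE k : weight k =
  (3 - 'C(k, p)%:R) * (p %| k)%:R - (2 - 'C(k, p)%:R) * (p %| k.+1)%:R.
Proof. by rewrite /weight !Fp_nat_indicator //; ring. Qed.

Lemma setfun_deg_le_weight (I : finType) :
  setfun_deg_le (p.-1 + p.-1) (fun S : {set I} => weight #|S|).
Proof.
have d_ind (g : {set I} -> F) : setfun_deg_le 1 g ->
    setfun_deg_le p.-1 (fun S => 1 - g S ^+ p.-1).
  move=> dg; apply: setfun_deg_leB.
    exact: setfun_deg_leW (setfun_deg_le_cst _ _).
  by apply: setfun_deg_leW (setfun_deg_leX _ dg); rewrite mul1n.
have d_card : setfun_deg_le 1 (fun S : {set I} => (#|S|%:R : F)).
  exact: setfun_deg_le_card.
have d_cardS : setfun_deg_le 1 (fun S : {set I} => (#|S|.+1%:R : F)).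
  have d1 := setfun_deg_leW (leq0n 1) (setfun_deg_le_cst I (1 : F)).
  by apply: eq_setfun_deg_le (setfun_deg_leD d_card d1) => S; rewrite natr1.
have d_diff : setfun_deg_le (p.-1).-1 (fun S : {set I} =>
    (1 - (#|S|%:R : F) ^+ p.-1) - (1 - (#|S|.+1%:R : F) ^+ p.-1)).
  apply: eq_setfun_deg_le (setfun_deg_le_powD1 p.-1 d_card) => S.
  by rewrite -natr1; ring.
apply: setfun_deg_leB; first apply: setfun_deg_leB.
- apply: setfun_deg_leW (setfun_deg_leM (setfun_deg_le_cst _ 3) (d_ind _ d_card)).
  by rewrite add0n leq_addr.
- apply: setfun_deg_leW (setfun_deg_leM (setfun_deg_le_cst _ 2) (d_ind _ d_cardS)).
  by rewrite add0n leq_addr.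
- apply: setfun_deg_leW (setfun_deg_leM (setfun_deg_le_bin _ _ p) d_diff).
  by have := prime_gt1 p_pr; lia.
Qed.

Ltac eval_nat_eqs := repeat match goal with
  | |- context[(?a == ?b)%N] =>
      first [have -> : (a == b) = true by lia | have -> : (a == b) = false by lia]
  end.

Lemma signed_weight k : odd p -> (k <= 4 * p - 3)%N ->
  (-1) ^+ k * weight k = 3 * (k == 0)%:R - 2 * (k == p - 1)%N%:R
    - 2 * (k == p)%:R + (k == 2 * p - 1)%N%:R + (k == 2 * p)%N%:R.
Proof.
move=> p_odd le_k; have p_gt2 := odd_prime_gt2 p_odd p_pr.
have [q [r [lt_rp def_k]]] : exists q r, (r < p)%N /\ k = (q * p + r)%N.
  by exists (k %/ p)%N, (k %% p)%N; rewrite ltn_pmod ?prime_gt0 -?divn_eq.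
have q_le3 : (q <= 3)%N by nia.
have dvd_qpD m : (p %| q * p + m)%N = (p %| m)%N by rewrite dvdn_addr ?dvdn_mull.
have sign_k : (-1) ^+ k = (-1) ^+ q * (-1) ^+ r :> F.
  by rewrite def_k -signr_odd oddD oddM p_odd andbT signr_addb !signr_odd.
rewrite sign_k weightE def_k Fp_bin_p // -addnS !dvd_qpD {sign_k dvd_qpD}.
have [r0 | r_gt0] := posnP r.
  rewrite r0 dvdn0 dvdn1 (gtn_eqF (prime_gt1 p_pr)).
  by case: q q_le3 {def_k} => [|[|[|[|q]]]] // _; eval_nat_eqs; rewrite /=; ring.
have [r_pred | r_neq] := eqVneq r.+1 p.
  have even_r : odd r = false by apply/negbTE; rewrite -oddS r_pred.
  rewrite r_pred dvdnn gtnNdvd // -[(-1) ^+ r]signr_odd even_r.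
  have q_le2 : (q <= 2)%N by nia.
  by case: q q_le2 {def_k q_le3} => [|[|[|q]]] // _; eval_nat_eqs; rewrite /=; ring.
rewrite !gtnNdvd //; last by rewrite ltn_neqAle r_neq.
by case: q q_le3 {def_k} => [|[|[|[|q]]]] // _; eval_nat_eqs; rewrite /=; ring.
Qed.

End Weight.

Section ZeroSumIndicator.
Variables (p N : nat) (X : 'I_N -> int * int).
Local Notation F := 'F_p.

Definition zero_sum_poly (S : {set 'I_N}) : F :=
  (1 - (\sum_(i in S) ((X i).1)%:~R) ^+ p.-1) *
  (1 - (\sum_(i in S) ((X i).2)%:~R) ^+ p.-1).

Lemma zero_sum_polyE S : prime p -> zero_sum_poly S = (zero_sum_mod p X S)%:R.
Proof.
move=> p_pr; rewrite /zero_sum_poly /zero_sum_mod !Fp_int_mod_eq0 //.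
by rewrite !rmorph_sum !Fp_indicator //; case: eqP; case: eqP; rewrite /= ?mulr1 ?mulr0.
Qed.

Lemma setfun_deg_le_zero_sum_poly : setfun_deg_le (p.-1 + p.-1) zero_sum_poly.
Proof.
have d_ind (a : 'I_N -> F) :
    setfun_deg_le p.-1 (fun S => 1 - (\sum_(i in S) a i) ^+ p.-1).
  apply: setfun_deg_leB; first exact: setfun_deg_leW (setfun_deg_le_cst _ _).
  by apply: setfun_deg_leW (setfun_deg_leX _ (setfun_deg_le_sum_in a)); rewrite mul1n.
exact: setfun_deg_leM (d_ind _) (d_ind _).
Qed.

Lemma sum_zero_sum_card j :
  \sum_(S : {set 'I_N}) (zero_sum_mod p X S)%:R * (#|S| == j)%:R = (nzs p j X)%:R :> F.
Proof.
rewrite /nzs -sumr_const [RHS]big_mkcond; apply: eq_bigr => S _.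
by rewrite inE; case: zero_sum_mod; case: (#|S| == j); rewrite /= ?mulr1 ?mulr0.
Qed.

Lemma nzs0 : nzs p 0 X = 1%N.
Proof.
rewrite /nzs (_ : [set S | _] = [set set0]) ?cards1 //; apply/setP => S.
rewrite !inE cards_eq0; have [-> | //] := eqVneq S set0.
by rewrite /zero_sum_mod !big_set0 !mod0z eqxx.
Qed.

End ZeroSumIndicator.

Theorem corollary6 (p : nat) (X : 'I_(4 * p - 3) -> int * int) :
  prime p -> odd p ->
  ((3 - 2 * (nzs p (p - 1) X)%:Z - 2 * (nzs p p X)%:Z
      + (nzs p (2 * p - 1) X)%:Z + (nzs p (2 * p) X)%:Z) %% p%:Z)%Z = 0.
Proof.
move=> p_pr p_odd; have p_gt2 := odd_prime_gt2 p_odd p_pr.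
apply/eqP; rewrite Fp_int_mod_eq0 //; apply/eqP.
have deg := setfun_deg_leM (setfun_deg_le_zero_sum_poly p X) (setfun_deg_le_weight p_pr _).
have := alternating_sum_eq0 deg; rewrite card_ord => /(_ ltac:(lia)) <-.
have le_card (S : {set 'I_(4 * p - 3)}) : (#|S| <= 4 * p - 3)%N.
  by have := max_card S; rewrite card_ord.
under eq_bigr => S _ do rewrite mulrCA zero_sum_polyE // signed_weight // ?le_card
  !(mulrDr, mulrN) !(mulrCA (zero_sum_mod _ _ _)%:R).
rewrite !(big_split, sumrN) /= -!mulr_sumr !sum_zero_sum_card nzs0.
by rewrite !intrD !intrN !intrM -!pmulrn; ring.
Qed.
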